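(* Let ancillae $A_1,\dots,A_n$ ($n\ge2$) consecutively measure a $d$-dimensional prepared quantum system $Q$, and let detectors $D_1,\dots,D_n$ amplify them. Then the information the last device has about the previous device is reduced by amplification: $$S(D_n:D_{n-1})\le S(A_n:A_{n-1}),$$ where the left side is computed in the amplified state and the right side in the unamplified state.
   Context: $Q$ is $d$-dimensional, initially in $|Q\rangle=\sum_{x_1}\alpha^{(1)}_{x_1}|\widetilde{x}_1\rangle$. Ancilla $A_i$ ($d$-dimensional, basis $\{|x\rangle\}$, initially $|0\rangle$) measures $Q$ in the orthonormal basis $\{|\widetilde{x}_i\rangle\}$ via $\sum_x|\widetilde{x}_i\rangle\langle\widetilde{x}_i|\otimes U_x$, $U_x|0\rangle=|x\rangle$; with unitary $U^{(i)}_{x_{i-1}x_i}=\langle\widetilde{x}_i|\widetilde{x}_{i-1}\rangle$ the unamplified state is $\sum_{x_1,\dots,x_n}\alpha^{(1)}_{x_1}U^{(2)}_{x_1x_2}\cdots U^{(n)}_{x_{n-1}x_n}|\widetilde{x}_n\rangle_Q|x_1\rangle_{A_1}\cdots|x_n\rangle_{A_n}$. Amplification: detector $D_i$ (initially $|0\rangle$) copies $A_i$, $|x\rangle_{A_i}|0\rangle_{D_i}\mapsto|x\rangle_{A_i}|x\rangle_{D_i}$. Entropies are von Neumann (log base $d$) of reduced states; $S(X:Y)=S(X)+S(Y)-S(XY)$. *)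

From HB Require Import structures.
From mathcomp Require Import all_boot all_order all_algebra.
From mathcomp Require Import reals exp.
From mathcomp Require Import complex.
Set Implicit Arguments. Unset Strict Implicit. Unset Printing Implicit Defensive.
Import Order.TTheory GRing.Theory Num.Theory.
Local Open Scope ring_scope.

Section QDefs.
Variable R : realType.
Local Notation C := R[i].

(* A composite system has a finite set of subsystem labels [L]; every  *)
(* subsystem is d-dimensional with computational basis 'I_d, so a basis *)
(* vector of the whole system is a configuration {ffun L -> 'I_d}, and   *)
(* a pure state is given by its coordinates psi : config -> C.          *)

Definition restr (L : finType) (d : nat) (S : {set L}) (x : {ffun L -> 'I_d})
  : {ffun {l : L | l \in S} -> 'I_d} := [ffun l => x (val l)].
Arguments restr {L d} S x.

(* reduced density matrix of |psi><psi| on the subsystems S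
   (partial trace over all subsystems outside S) *)
Definition reduced (L : finType) (d : nat) (psi : {ffun L -> 'I_d} -> C)
  (S : {set L}) (k k' : {ffun {l : L | l \in S} -> 'I_d}) : C :=
  \sum_(x : {ffun L -> 'I_d} | restr S x == k)
    \sum_(y : {ffun L -> 'I_d} | (restr S y == k') &&
                                 [forall l, (l \notin S) ==> (x l == y l)])
      psi x * (psi y)^*.
Arguments reduced {L d} psi S k k'.

Definition opmx (K : finType) (f : K -> K -> C) : 'M[C]_#|K| :=
  \matrix_(i, j) f (enum_val i) (enum_val j).

Definition eigs (m : nat) (A : 'M[C]_m) : seq C :=
  sval (closed_field_poly_normal (char_poly A)).

Definition xlogx (b t : R) : R := if t == 0 then 0 else t * (ln t / ln b).

Definition vN_entropy (b : R) (m : nat) (rho : 'M[C]_m) : R :=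
  - \sum_(z <- eigs rho) xlogx b (complex.Re z).

Definition Ssub (L : finType) (d : nat) (psi : {ffun L -> 'I_d} -> C)
  (S : {set L}) : R :=
  vN_entropy d%:R (opmx (reduced psi S)).

Definition mutinf (L : finType) (d : nat) (psi : {ffun L -> 'I_d} -> C)
  (X Y : {set L}) : R :=
  Ssub psi X + Ssub psi Y - Ssub psi (X :|: Y).

Definition unitary (m : nat) (A : 'M[C]_m) : Prop :=
  (\matrix_(i, j) (A j i)^*) *m A = 1%:M.

(* Unamplified system: Q and the ancillae A_1..A_n.
   Labels: None = Q, Some k = A_(k+1)  (k : 'I_n). *)
Definition labU (n : nat) := option 'I_n.
Definition lQ (n : nat) : labU n := None.
Definition lA (n : nat) (j : nat) : labU n :=
  if (insub j.-1 : option 'I_n) is Some k then Some k else None.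

(* Amplified system: Q, A_1..A_n, D_1..D_n.
   Labels: None = Q, Some (inl k) = A_(k+1), Some (inr k) = D_(k+1). *)
Definition labAmp (n : nat) := option ('I_n + 'I_n)%type.
Definition lAa (n : nat) (j : nat) : labAmp n := omap inl (lA n j).
Definition lDa (n : nat) (j : nat) : labAmp n := omap inr (lA n j).

Variables (n d : nat).
(* alpha = coordinates of the initial |Q> in the basis {|x~_1>};
   B i = the matrix whose column x is the vector |x~_i> (i = 1..n),
   written in the computational basis of Q. *)
Variables (alpha : 'I_d -> C) (B : nat -> 'M[C]_d).

(* U^(i)_(x_(i-1) x_i) = < x~_i | x~_(i-1) > *)
Definition Umat (i : nat) (x y : 'I_d) : C :=
  \sum_(q : 'I_d) (B i q y)^* * B i.-1 q x.

(* the unamplified state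
   sum_x alpha_x1 U^(2)_(x1 x2) ... U^(n)_(x(n-1) xn) |x~_n>_Q |x1>...|xn>,
   coordinates in the computational basis of Q ⊗ A_1 ⊗ ... ⊗ A_n *)
Definition unamp_state (c : {ffun labU n -> 'I_d}) : C :=
  B n (c (lQ n)) (c (lA n n)) * alpha (c (lA n 1)) *
  \prod_(2 <= j < n.+1) Umat j (c (lA n j.-1)) (c (lA n j)).

(* the amplified state: each D_i (initially |0>) copies A_i,
   |x>_(A_i)|0>_(D_i) |-> |x>_(A_i)|x>_(D_i), applied to the unamplified state *)
Definition amp_state (c : {ffun labAmp n -> 'I_d}) : C :=
  if [forall k : 'I_n, c (Some (inr k)) == c (Some (inl k))]
  then unamp_state [ffun l => c (omap inl l)]
  else 0.

End QDefs.

(* Amplification copies every ancilla A_i into its detector D_i, so the reduced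
   state of any set of detectors is diagonal in the computational basis, with the
   same diagonal as the corresponding ancillae: S(D_n), S(D_(n-1)) and
   S(D_n D_(n-1)) are the Shannon entropies of the outcome distributions.  Without
   amplification, the single ancillae A_n and A_(n-1) are diagonal as well: tracing
   out Q (and A_n) kills their coherences by orthonormality of the columns of B_n
   and of the rows of U^(n).  Only the joint state of A_n A_(n-1) may keep
   coherences, and its von Neumann entropy is at most the Shannon entropy of its
   diagonal, since that diagonal is a doubly stochastic average of its eigenvalues
   and t ln t is convex. *)

From HB Require Import structures.
From mathcomp Require Import all_boot all_order all_algebra.
From mathcomp Require Import reals exp.
From mathcomp Require Import complex.
From mathcomp Require Import ring lra zify.
Import Order.TTheory GRing.Theory Num.Theory.
Local Open Scope ring_scope.
Set Implicit Arguments. Unset Strict Implicit. Unset Printing Implicit Defensive.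

Section XlnxConvexity.
Variable R : realType.

Lemma xlnx_ge_tangent (x p : R) : 0 <= x -> 0 < p -> x * ln p + x - p <= x * ln x.
Proof.
move=> x_ge0 p_gt0; have [->|x_neq0] := eqVneq x 0.
  by rewrite !mul0r add0r subr_le0 ltW.
have x_gt0 : 0 < x by rewrite lt_def x_neq0 x_ge0.
have : ln (1 + (p / x - 1)) <= p / x - 1.
  by apply: le_ln1Dx; rewrite -subr_gt0 opprK subrK divr_gt0.
rewrite addrC subrK lnM ?posrE ?invr_gt0 // lnV ?posrE // => ln_le.
have : x * (ln p - ln x) <= x * (p / x - 1) by rewrite ler_pM2l.
have -> : x * (p / x - 1) = p - x by field; rewrite gt_eqF.
lra.
Qed.

Lemma jensen_xlnx (I : finType) (w a : I -> R) :
  (forall i, 0 <= w i) -> (forall i, 0 <= a i) -> \sum_i w i = 1 ->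
  (\sum_i w i * a i) * ln (\sum_i w i * a i) <= \sum_i w i * (a i * ln (a i)).
Proof.
move=> w_ge0 a_ge0 w_sum1; set p := \sum_i _.
have wa_ge0 i : 0 <= w i * a i by rewrite mulr_ge0.
have [p0|p_neq0] := eqVneq p 0.
  rewrite p0 mul0r big1 // => i _.
  by rewrite mulrA (psumr_eq0P (fun i _ => wa_ge0 i) p0) // mul0r.
have p_gt0 : 0 < p by rewrite lt_def p_neq0 sumr_ge0.
apply: (@le_trans _ _ (\sum_i w i * (a i * ln p + a i - p))); last first.
  by apply: ler_sum => i _; apply/ler_wpM2l/xlnx_ge_tangent.
rewrite (eq_bigr (fun i => w i * a i * ln p + w i * a i - w i * p)); last first.
  by move=> i _; ring.
rewrite !big_split /= sumrN -!mulr_suml -/p w_sum1 mul1r.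
by rewrite addrK.
Qed.

Lemma doubly_stochastic_xlnx_le (I : finType) (W : I -> I -> R) (a : I -> R) :
  (forall i j, 0 <= W i j) -> (forall j, \sum_i W i j = 1) ->
  (forall i, \sum_j W i j = 1) -> (forall i, 0 <= a i) ->
  \sum_j (\sum_i W i j * a i) * ln (\sum_i W i j * a i) <= \sum_i a i * ln (a i).
Proof.
move=> W_ge0 col1 row1 a_ge0.
rewrite [leRHS](eq_bigr (fun i => \sum_j W i j * (a i * ln (a i)))); last first.
  by move=> i _; rewrite -mulr_suml row1 mul1r.
by rewrite [leRHS]exchange_big; apply: ler_sum => j _; apply: jensen_xlnx.
Qed.

End XlnxConvexity.

Lemma char_poly_conj (F : fieldType) m (P M : 'M[F]_m) : P \in unitmx ->
  char_poly (invmx P *m M *m P) = char_poly M.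
Proof.
move=> P_unit; rewrite /char_poly /char_poly_mx.
have PVP : map_mx polyC (invmx P) *m map_mx polyC P = 1%:M.
  by rewrite -map_mxM mulVmx // map_mx1.
have -> : 'X%:M - map_mx polyC (invmx P *m M *m P) =
    map_mx polyC (invmx P) *m ('X%:M - map_mx polyC M) *m map_mx polyC P.
  rewrite !map_mxM mulmxBr mulmxBl; congr (_ - _).
  by rewrite scalar_mxC -mulmxA PVP mulmx1.
by rewrite !det_mulmx mulrAC -det_mulmx PVP det1 mul1r.
Qed.

Section Spectrum.
Variable R : realType.
Local Notation C := R[i].
Local Open Scope sesquilinear_scope.

Lemma perm_eq_eigs m (A : 'M[C]_m) (c : 'I_m -> C) :
  char_poly A = \prod_i ('X - (c i)%:P) -> perm_eq (eigs A) (map c (enum 'I_m)).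
Proof.
rewrite /eigs; case: closed_field_poly_normal => r /= A_split cpA.
move: A_split; rewrite (eqP (char_poly_monic A)) scale1r cpA => A_split.
by apply: prod_XsubC_eq; rewrite big_map big_enum -A_split.
Qed.

Lemma Re_sum (I : Type) (s : seq I) (P : pred I) (F : I -> C) :
  complex.Re (\sum_(i <- s | P i) F i) = \sum_(i <- s | P i) complex.Re (F i).
Proof. exact: (linear_sum (@complex.Re R)). Qed.

Lemma ge0_complexE (x : C) : 0 <= x -> x = (complex.Re x)%:C%C.
Proof. by case: x => a b; rewrite lecE /= => /andP[/eqP ->]. Qed.

Lemma unitarymx_row_sqnorm m (P : 'M[C]_m) k : P \is unitarymx ->
  \sum_j complex.Re (P k j * (P k j)^*) = 1.
Proof.
move/unitarymxP/matrixP/(_ k k); rewrite !mxE eqxx mulr1n => PPt.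
by rewrite -Re_sum -[RHS]/(complex.Re 1) -PPt; congr complex.Re;
  apply: eq_bigr => j _; rewrite !mxE.
Qed.

Lemma unitarymx_col_sqnorm m (P : 'M[C]_m) j : P \is unitarymx ->
  \sum_k complex.Re (P k j * (P k j)^*) = 1.
Proof.
rewrite -trmxC_unitary => /(unitarymx_row_sqnorm j) <-.
by apply: eq_bigr => k _; rewrite !mxE conjCK mulrC.
Qed.

Section GramMatrix.
Variables (m : nat) (A : 'M[C]_m) (I : finType) (P : pred I) (v : I -> 'I_m -> C).
Hypothesis A_gram : forall i j, A i j = \sum_(w | P w) v w i * (v w j)^*.

Lemma gram_hermitian : A ^t* = A.
Proof.
apply/matrixP => i j; rewrite !mxE !A_gram rmorph_sum; apply: eq_bigr => w _.
by rewrite rmorphM /= conjCK mulrC.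
Qed.

Lemma gram_conjmx_diag_ge0 (Q : 'M[C]_m) i : 0 <= (Q *m A *m Q ^t*) i i.
Proof.
pose u w := \sum_j Q i j * v w j.
suff -> : (Q *m A *m Q ^t*) i i = \sum_(w | P w) u w * (u w)^*.
  by apply: sumr_ge0 => w _; apply: mul_conjC_ge0.
rewrite mxE (eq_bigr (fun j => \sum_k \sum_(w | P w)
    Q i k * v w k * (v w j)^* * (Q i j)^*)); last first.
  move=> j _; rewrite !mxE mulr_suml; apply: eq_bigr => k _.
  by rewrite A_gram mulr_sumr mulr_suml; apply: eq_bigr => w _; ring.
rewrite [RHS](eq_bigr (fun w => \sum_k \sum_j
    Q i k * v w k * (v w j)^* * (Q i j)^*)); last first.
  move=> w _; rewrite mulr_suml; apply: eq_bigr => k _.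
  by rewrite rmorph_sum mulr_sumr; apply: eq_bigr => j _; rewrite rmorphM /=; ring.
rewrite exchange_big /=; under eq_bigr do rewrite exchange_big /=.
by rewrite exchange_big.
Qed.

Lemma diag_xlnx_le_eigs :
  \sum_j complex.Re (A j j) * ln (complex.Re (A j j))
    <= \sum_(z <- eigs A) complex.Re z * ln (complex.Re z).
Proof.
have /orthomx_spectralP : A \is normalmx by apply/normalmxP; rewrite gram_hermitian.
set U := spectralmx A; set D := spectral_diag A => A_spectral.
have U_unitary : U \is unitarymx := spectral_unitarymx A.
have cpA : char_poly A = \prod_i ('X - (D 0 i)%:P).
  rewrite A_spectral char_poly_conj ?spectral_unit // char_poly_trig ?diag_mx_is_trig //.
  by apply: eq_bigr => i _; rewrite mxE eqxx mulr1n.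
rewrite (perm_big _ (perm_eq_eigs cpA)) big_map big_enum /=.
have D_ge0 i : 0 <= D 0 i.
  have -> : D 0 i = (U *m A *m U ^t*) i i.
    rewrite A_spectral invmx_unitary // !mulmxA (unitarymxP U_unitary) mul1mx.
    by rewrite -mulmxA (unitarymxP U_unitary) mulmx1 mxE eqxx mulr1n.
  exact: gram_conjmx_diag_ge0.
pose W k j := complex.Re (U k j * (U k j)^*).
have A_diag j : complex.Re (A j j) = \sum_k W k j * complex.Re (D 0 k).
  rewrite {1}A_spectral invmx_unitary // mul_mx_diag mxE Re_sum.
  apply: eq_bigr => k _; rewrite !mxE mulrAC [(U k j)^* * _]mulrC.
  rewrite (ge0_complexE (mul_conjC_ge0 (U k j))) (ge0_complexE (D_ge0 k)).
  by rewrite -rmorphM.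
under eq_bigr do rewrite A_diag.
apply: doubly_stochastic_xlnx_le => [k j||k|k].
- by rewrite -ler0c -ge0_complexE ?mul_conjC_ge0.
- by move=> j; apply: unitarymx_col_sqnorm.
- exact: unitarymx_row_sqnorm.
- by rewrite -ler0c -ge0_complexE.
Qed.

End GramMatrix.
End Spectrum.

Section Configurations.
Variables (R : realType) (L : finType) (d : nat).
Local Notation C := R[i].
Local Notation cfg := {ffun L -> 'I_d}.
Local Notation scfg S := {ffun {l : L | l \in S} -> 'I_d}.

Definition glue (S : {set L}) (k : scfg S) (w : cfg) : cfg :=
  [ffun l => if insub l is Some s then k s else w l].

Lemma glue_in (S : {set L}) (k : scfg S) w s : glue k w (val s) = k s.
Proof. by rewrite ffunE valK. Qed.

Lemma glue_inE (S : {set L}) (k : scfg S) w l (lS : l \in S) :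
  glue k w l = k (Sub l lS).
Proof. by rewrite -[l]/(val (Sub l lS : {l | l \in S})) glue_in. Qed.

Lemma glue_out (S : {set L}) (k : scfg S) w l : l \notin S -> glue k w l = w l.
Proof. by move=> lS; rewrite ffunE insubF //; apply/negbTE. Qed.

Lemma restr_glue (S : {set L}) (k : scfg S) w : restr S (glue k w) = k.
Proof. by apply/ffunP => s; rewrite ffunE glue_in. Qed.

Lemma glue_glue (S : {set L}) (k k' : scfg S) w : glue k (glue k' w) = glue k w.
Proof.
apply/ffunP => l; case: (boolP (l \in S)) => lS; first by rewrite !glue_inE.
by rewrite !glue_out.
Qed.

Lemma glue_restr (S : {set L}) w : glue (restr S w) w = w.
Proof.
apply/ffunP => l; case: (boolP (l \in S)) => lS; last by rewrite glue_out.
by rewrite glue_inE ffunE.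
Qed.

Lemma glue_eq (S : {set L}) (k : scfg S) w : (glue k w == w) = (restr S w == k).
Proof.
by apply/eqP/eqP => [<-|<-]; [rewrite restr_glue | rewrite glue_restr].
Qed.

(* [k0] is arbitrary: [w] ranges over one representative of each configuration
   of the complement of [S]. *)
Lemma reduced_glue (psi : cfg -> C) (S : {set L}) (k k' k0 : scfg S) :
  reduced psi k k' =
    \sum_(w | restr S w == k0) psi (glue k w) * (psi (glue k' w))^*.
Proof.
have partner (x y : cfg) : (restr S y == k') && [forall l, (l \notin S) ==> (x l == y l)]
    = (y == glue k' x).
  apply/andP/eqP => [[/eqP <- /forallP agree]|->]; last first.
    by rewrite restr_glue; split=> //; apply/forallP => l; apply/implyP => lS;
      rewrite glue_out.
  apply/ffunP => l; case: (boolP (l \in S)) => lS; first by rewrite glue_inE ffunE.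
  by rewrite glue_out //; apply/esym/eqP; move/implyP: (agree l); apply.
rewrite /reduced (eq_bigr (fun x => psi x * (psi (glue k' x))^*)); last first.
  by move=> x _; rewrite (big_pred1 (glue k' x)) // => y; rewrite /= partner.
rewrite (reindex_onto (glue k) (glue k0)); last first.
  by move=> x /eqP <-; rewrite glue_glue glue_restr.
apply: eq_big => [w|w _]; last by rewrite glue_glue.
by rewrite restr_glue eqxx glue_glue glue_eq.
Qed.

Lemma reduced_diag (psi : cfg -> C) (S : {set L}) (k : scfg S) :
  reduced psi k k = \sum_(x | restr S x == k) psi x * (psi x)^*.
Proof. by rewrite (reduced_glue _ _ _ k); apply: eq_bigr => w /eqP <-; rewrite glue_restr. Qed.

Definition upd (w : cfg) (l : L) (q : 'I_d) : cfg :=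
  [ffun l' => if l' == l then q else w l'].

Lemma upd_same w l q : upd w l q l = q.
Proof. by rewrite ffunE eqxx. Qed.

Lemma upd_other w l q l' : l' != l -> upd w l q l' = w l'.
Proof. by move=> l'l; rewrite ffunE (negbTE l'l). Qed.

Lemma upd_upd w l q q' : upd (upd w l q) l q' = upd w l q'.
Proof. by apply/ffunP => l'; rewrite !ffunE; case: eqP. Qed.

Lemma upd_id w l : upd w l (w l) = w.
Proof. by apply/ffunP => l'; rewrite ffunE; case: eqP => [->|]. Qed.

Lemma glue_upd (S : {set L}) (k : scfg S) w l q : l \notin S ->
  glue k (upd w l q) = upd (glue k w) l q.
Proof.
move=> lS; apply/ffunP => l'; case: (boolP (l' \in S)) => l'S.
  have l'l : l' != l by apply: contraNneq lS => <-.
  by rewrite upd_other // !glue_inE.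
rewrite glue_out //; have [->|l'l] := eqVneq l' l; first by rewrite !upd_same.
by rewrite !upd_other // glue_out.
Qed.

Lemma restr_upd (S : {set L}) w l q : l \notin S -> restr S (upd w l q) = restr S w.
Proof.
move=> lS; apply/ffunP => s; rewrite !ffunE; case: eqP => // sl.
by move: (valP s); rewrite sl (negbTE lS).
Qed.

Lemma sum_upd (P : pred cfg) (F : cfg -> C) l (o : 'I_d) :
  (forall w q, P (upd w l q) = P w) ->
  \sum_(w | P w) F w = \sum_(w | P w && (w l == o)) \sum_q F (upd w l q).
Proof.
move=> P_upd; rewrite (partition_big (fun w : cfg => w l) predT) //=.
rewrite [RHS]exchange_big /=; apply: eq_bigr => q _.
rewrite (reindex_onto (fun w => upd w l q) (fun w => upd w l o)); last first.
  by move=> w /andP[_ /eqP <-]; rewrite upd_upd upd_id.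
apply: eq_bigl => w; rewrite P_upd upd_same eqxx andbT upd_upd.
by congr (_ && _); apply/eqP/eqP => [<-|<-]; rewrite ?upd_same ?upd_id.
Qed.

Lemma set1_cfg_neq (l : L) (k k' : scfg [set l]) :
  k != k' -> k (Sub l (set11 l)) != k' (Sub l (set11 l)).
Proof.
apply: contraNneq => kk'; apply/eqP/ffunP => s.
have -> : s = Sub l (set11 l) by apply: val_inj; apply/set1P: (valP s).
exact: kk'.
Qed.

End Configurations.

Section Entropy.
Variable R : realType.
Local Notation C := R[i].

Definition diag_entropy (b : R) (K : finType) (f : K -> K -> C) : R :=
  - \sum_k xlogx b (complex.Re (f k k)).

Lemma xlogxE (b t : R) : xlogx b t = (ln b)^-1 * (t * ln t).
Proof. by rewrite /xlogx; case: eqP => [->|_]; [rewrite !mul0r mulr0 | rewrite mulrA mulrC]. Qed.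

Lemma sum_opmx_diag (K : finType) (f : K -> K -> C) (G : C -> R) :
  \sum_i G (opmx f i i) = \sum_k G (f k k).
Proof.
by rewrite (reindex _ (onW_bij _ (@enum_val_bij K))); apply: eq_bigr => k _; rewrite mxE.
Qed.

Lemma vN_entropy_diag (b : R) (K : finType) (f : K -> K -> C) :
  (forall k k', k != k' -> f k k' = 0) -> vN_entropy b (opmx f) = diag_entropy b f.
Proof.
move=> f_offdiag.
have cpf : char_poly (opmx f) = \prod_i ('X - (opmx f i i)%:P).
  rewrite char_poly_trig //; apply/is_diag_mx_is_trig/is_diag_mxP => i j ij.
  by rewrite mxE f_offdiag // (inj_eq enum_val_inj).
rewrite /vN_entropy (perm_big _ (perm_eq_eigs cpf)) big_map big_enum /=.
by rewrite (sum_opmx_diag f (fun z => xlogx b (complex.Re z))).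
Qed.

Lemma vN_entropy_reduced_le (b : R) (L : finType) (d : nat)
    (psi : {ffun L -> 'I_d} -> C) (S : {set L}) : (0 < d)%N -> 1 <= b ->
  vN_entropy b (opmx (reduced psi (S := S))) <= diag_entropy b (reduced psi (S := S)).
Proof.
move=> d_gt0 b_ge1; pose k0 : {ffun {l | l \in S} -> 'I_d} := [ffun => Ordinal d_gt0].
rewrite /vN_entropy /diag_entropy lerN2.
under eq_bigr do rewrite xlogxE; under [leRHS]eq_bigr do rewrite xlogxE.
rewrite -!mulr_sumr ler_wpM2l ?invr_ge0 ?ln_ge0 //.
rewrite -(sum_opmx_diag _ (fun z => complex.Re z * ln (complex.Re z))).
apply: (diag_xlnx_le_eigs (P := fun w => restr S w == k0)
  (v := fun w i => psi (glue (enum_val i) w))) => i j.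
by rewrite mxE (reduced_glue _ _ _ k0).
Qed.

End Entropy.

Section Unitary.
Variable R : realType.
Local Notation C := R[i].

Lemma unitary_col_orth m (M : 'M[C]_m) a a' : unitary M ->
  \sum_q (M q a')^* * M q a = (a' == a)%:R.
Proof.
by move=> /matrixP /(_ a' a); rewrite !mxE => <-; apply: eq_bigr => q _; rewrite mxE.
Qed.

Lemma unitary_row_orth m (M : 'M[C]_m) q q' : unitary M ->
  \sum_b M q' b * (M q b)^* = (q' == q)%:R.
Proof.
move=> /mulmx1C /matrixP /(_ q' q); rewrite !mxE => <-.
by apply: eq_bigr => b _; rewrite mxE.
Qed.

Lemma Umat_row_orth d (B : nat -> 'M[C]_d) i a a' :
  unitary (B i) -> unitary (B i.-1) -> a != a' ->
  \sum_b Umat B i a b * (Umat B i a' b)^* = 0.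
Proof.
move=> Bi_unitary Bi1_unitary aa'.
rewrite /Umat (eq_bigr (fun b => \sum_q \sum_q'
    B i.-1 q a * (B i.-1 q' a')^* * (B i q' b * (B i q b)^*))); last first.
  move=> b _; rewrite rmorph_sum mulr_suml; apply: eq_bigr => q _.
  by rewrite mulr_sumr; apply: eq_bigr => q' _; rewrite rmorphM /= conjCK; ring.
rewrite exchange_big /= (eq_bigr (fun q => B i.-1 q a * (B i.-1 q a')^*)); last first.
  move=> q _; rewrite exchange_big /= (bigD1 q) //= [X in _ + X]big1 ?addr0.
    by rewrite -mulr_sumr unitary_row_orth // eqxx mulr1.
  by move=> q' q'q; rewrite -mulr_sumr unitary_row_orth // (negbTE q'q) mulr0.
apply/eqP; rewrite -conjC_eq0 rmorph_sum; apply/eqP.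
have := unitary_col_orth a' a Bi1_unitary; rewrite (negbTE aa') => /(eq_trans _); apply.
by apply: eq_bigr => q _; rewrite rmorphM /= conjCK mulrC.
Qed.

End Unitary.

Section Labels.
Variable n : nat.

Lemma lA_some j (jn : (j.-1 < n)%N) : lA n j = Some (Ordinal jn).
Proof. by rewrite /lA insubT. Qed.

Lemma lA_eq j j' : (0 < j <= n)%N -> (0 < j' <= n)%N -> (lA n j == lA n j') = (j == j').
Proof.
move=> jn j'n; have jn1 : (j.-1 < n)%N by lia. have j'n1 : (j'.-1 < n)%N by lia.
apply/eqP/eqP => [|-> //].
by rewrite (lA_some jn1) (lA_some j'n1) => /(congr1 (omap val)) [] /eqP; lia.
Qed.

Hypothesis n_gt0 : (0 < n)%N.

Lemma lA_neq_Q j : (j <= n)%N -> lA n j != lQ n.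
Proof.
move=> jn; have jn' : (j.-1 < n)%N by lia.
by rewrite (lA_some jn').
Qed.

End Labels.

Section Unamplified.
Variables (R : realType) (n d : nat) (alpha : 'I_d -> R[i]) (B : nat -> 'M[R[i]]_d).
Hypotheses (n_ge2 : (2 <= n)%N) (d_gt0 : (0 < d)%N).
Hypotheses (Bn_unitary : unitary (B n)) (Bn1_unitary : unitary (B n.-1)).
Local Notation C := R[i].
Local Notation cfg := {ffun labU n -> 'I_d}.
Local Notation psi := (unamp_state alpha B).
Let n_gt0 : (0 < n)%N := ltnW n_ge2.

Definition traj_amp_pre (c : cfg) : C :=
  alpha (c (lA n 1)) * \prod_(2 <= j < n) Umat B j (c (lA n j.-1)) (c (lA n j)).

Lemma unamp_stateE c : psi c =
  B n (c (lQ n)) (c (lA n n)) * Umat B n (c (lA n n.-1)) (c (lA n n)) * traj_amp_pre c.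
Proof. by rewrite /unamp_state /traj_amp_pre big_nat_recr /=; [ring | lia]. Qed.

Lemma traj_amp_pre_local (c c' : cfg) : (forall j, (0 < j < n)%N -> c (lA n j) = c' (lA n j)) ->
  traj_amp_pre c = traj_amp_pre c'.
Proof.
move=> cc'; rewrite /traj_amp_pre cc'; last by lia.
by congr (_ * _); apply: eq_big_nat => j jn; rewrite !cc' //; lia.
Qed.

Local Notation scfg S := {ffun {l : labU n | l \in S} -> 'I_d}.

Lemma reduced_An_offdiag (k k' : scfg [set lA n n]) : k != k' -> reduced psi k k' = 0.
Proof.
move=> kk'; pose s : {l | l \in [set lA n n]} := Sub (lA n n) (set11 _).
have Q_out : lQ n \notin [set lA n n] by rewrite in_set1 eq_sym lA_neq_Q.
have An1_out : lA n n.-1 \notin [set lA n n] by rewrite in_set1 lA_eq; lia.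
have psi_glue (kk : scfg [set lA n n]) w q : psi (glue kk (upd w (lQ n) q)) =
    B n q (kk s) * (Umat B n (w (lA n n.-1)) (kk s) * traj_amp_pre w).
  rewrite unamp_stateE -mulrA (glue_out _ _ Q_out) (glue_out _ _ An1_out).
  rewrite (glue_inE _ _ (set11 _)) upd_same upd_other; last by rewrite lA_neq_Q //; lia.
  congr (_ * (_ * _)); apply: traj_amp_pre_local => j jn.
  have jA : lA n j \notin [set lA n n] by rewrite in_set1 lA_eq; lia.
  by rewrite glue_out // upd_other // lA_neq_Q //; lia.
rewrite (reduced_glue _ _ _ k) (sum_upd _ (l := lQ n) (Ordinal d_gt0)); last first.
  by move=> w q; rewrite restr_upd.
apply: big1 => w _; rewrite (eq_bigr (fun q => (B n q (k' s))^* * B n q (k s) *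
  ((Umat B n (w (lA n n.-1)) (k s) * traj_amp_pre w) *
   (Umat B n (w (lA n n.-1)) (k' s) * traj_amp_pre w)^*))); last first.
  by move=> q _; rewrite !psi_glue rmorphM /=; ring.
by rewrite -mulr_suml unitary_col_orth // eq_sym (negbTE (set1_cfg_neq kk')) mul0r.
Qed.

Lemma reduced_An1_offdiag (k k' : scfg [set lA n n.-1]) : k != k' -> reduced psi k k' = 0.
Proof.
move=> kk'; pose s : {l | l \in [set lA n n.-1]} := Sub (lA n n.-1) (set11 _).
have AnQ : lA n n != lQ n by rewrite lA_neq_Q.
have An1Q : lA n n.-1 != lQ n by rewrite lA_neq_Q //; lia.
have An1An : lA n n.-1 != lA n n by rewrite lA_eq; lia.
have Q_out : lQ n \notin [set lA n n.-1] by rewrite in_set1 eq_sym.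
have An_out : lA n n \notin [set lA n n.-1] by rewrite in_set1 eq_sym.
have psi_glue (kk : scfg [set lA n n.-1]) w b q :
    psi (glue kk (upd (upd w (lA n n) b) (lQ n) q)) =
    B n q b * (Umat B n (kk s) b * traj_amp_pre (glue kk w)).
  rewrite unamp_stateE -mulrA !glue_upd // upd_same (upd_other _ _ AnQ) upd_same.
  rewrite (upd_other _ _ An1Q) (upd_other _ _ An1An) (glue_inE _ _ (set11 _)).
  congr (_ * (_ * _)); apply: traj_amp_pre_local => j jn.
  rewrite !upd_other ?lA_neq_Q //; try lia.
  by rewrite lA_eq; lia.
rewrite (reduced_glue _ _ _ k) (sum_upd _ (l := lQ n) (Ordinal d_gt0)); last first.
  by move=> w q; rewrite restr_upd.
rewrite (sum_upd _ (l := lA n n) (Ordinal d_gt0)); last first.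
  by move=> w b; rewrite restr_upd // upd_other // eq_sym.
apply: big1 => w _; rewrite (eq_bigr (fun b =>
  Umat B n (k s) b * (Umat B n (k' s) b)^* *
  (traj_amp_pre (glue k w) * (traj_amp_pre (glue k' w))^*))); last first.
  move=> b _; rewrite (eq_bigr (fun q => (B n q b)^* * B n q b *
    (Umat B n (k s) b * (Umat B n (k' s) b)^* *
    (traj_amp_pre (glue k w) * (traj_amp_pre (glue k' w))^*)))); last first.
    by move=> q _; rewrite !psi_glue !rmorphM /=; ring.
  by rewrite -mulr_suml unitary_col_orth // eqxx mul1r.
by rewrite -mulr_suml Umat_row_orth ?(set1_cfg_neq kk') // mul0r.
Qed.

End Unamplified.

Section Amplified.
Variables (R : realType) (n d : nat) (alpha : 'I_d -> R[i]) (B : nat -> 'M[R[i]]_d).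
Local Notation C := R[i].
Local Notation cfg := {ffun labU n -> 'I_d}.
Local Notation cfgA := {ffun labAmp n -> 'I_d}.
Local Notation scfg S := {ffun {l : labU n | l \in S} -> 'I_d}.
Local Notation scfgA S := {ffun {l : labAmp n | l \in S} -> 'I_d}.
Local Notation psi := (unamp_state alpha B).
Local Notation psia := (amp_state alpha B).

Definition toD (l : labU n) : labAmp n := omap inr l.

Lemma toD_inj : injective toD.
Proof. by move=> [a|] [b|] // [->]. Qed.

Definition amplify (c : cfg) : cfgA :=
  [ffun l => c (omap (fun s => match s with inl i | inr i => i end) l)].

Definition unamplify (x : cfgA) : cfg := [ffun l => x (omap inl l)].

Definition copied (x : cfgA) : bool := [forall k, x (Some (inr k)) == x (Some (inl k))].

Lemma amp_stateE x : psia x = if copied x then psi (unamplify x) else 0.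
Proof. by []. Qed.

Lemma amplify_toD c l : amplify c (toD l) = c l.
Proof. by rewrite ffunE; case: l. Qed.

Lemma amplifyK : cancel amplify unamplify.
Proof. by move=> c; apply/ffunP => l; rewrite !ffunE; case: l. Qed.

Lemma unamplifyK x : copied x -> amplify (unamplify x) = x.
Proof. by move/forallP => xc; apply/ffunP => -[[i|i]|]; rewrite !ffunE //= (eqP (xc i)). Qed.

Lemma amp_state_amplify c : psia (amplify c) = psi c.
Proof.
have c_copied : copied (amplify c) by apply/forallP => k; rewrite !ffunE.
by rewrite amp_stateE c_copied amplifyK.
Qed.

Lemma sum_amplify (F : cfgA -> C) : (forall x, ~~ copied x -> F x = 0) ->
  \sum_x F x = \sum_c F (amplify c).
Proof.
move=> F0; rewrite (partition_big unamplify predT) //=; apply: eq_bigr => c _.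
rewrite (bigD1 (amplify c)) ?amplifyK //= big1 ?addr0 // => x /andP[/eqP xc x_neq].
have [x_copied|] := boolP (copied x); last exact: F0.
by move: x_neq; rewrite -(unamplifyK x_copied) xc eqxx.
Qed.

Lemma reduced_amp_offdiag (S : {set labU n}) : lQ n \notin S ->
  forall k k' : scfgA (toD @: S), k != k' -> reduced psia k k' = 0.
Proof.
move=> QS k k' kk'; rewrite (reduced_glue _ _ _ k); apply: big1 => w _.
have [kc|] := boolP (copied (glue k w)); last by rewrite amp_stateE => /negbTE ->; rewrite mul0r.
have [k'c|] := boolP (copied (glue k' w)); last first.
  by rewrite [psia (glue k' w)]amp_stateE => /negbTE ->; rewrite conjC0 mulr0.
case/eqP: kk'; apply/ffunP => t; have [[i|] iS tE] := imsetP (valP t); last by rewrite iS in QS.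
have A_out : Some (inl i) \notin toD @: S by apply/imsetP => -[[?|] _].
rewrite -(glue_in k w) -(glue_in k' w) tE.
by rewrite (eqP (forallP kc i)) (eqP (forallP k'c i)) !glue_out.
Qed.

Section Marginal.
Variable S : {set labU n}.

Definition pullD (k : scfgA (toD @: S)) : scfg S :=
  [ffun s => k (Sub (toD (val s)) (imset_f toD (valP s)))].

Lemma pullD_Sub (k : scfgA (toD @: S)) l (lS : l \in S) :
  pullD k (Sub l lS) = k (Sub (toD l) (imset_f toD lS)).
Proof. by rewrite ffunE; congr (fun_of_fin k); apply: val_inj. Qed.

Lemma imset_toD_Sub (t : {l | l \in toD @: S}) :
  exists l (lS : l \in S), t = Sub (toD l) (imset_f toD lS).
Proof. by have [l lS tE] := imsetP (valP t); exists l, lS; apply: val_inj. Qed.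

Lemma pullD_bij : bijective pullD.
Proof.
apply: inj_card_bij => [k1 k2 k12|].
  by apply/ffunP => t; have [l [lS ->]] := imset_toD_Sub t; rewrite -!pullD_Sub k12.
by rewrite !card_ffun !card_sig (card_imset _ toD_inj).
Qed.

Lemma restr_amplify c k : (restr (toD @: S) (amplify c) == k) = (restr S c == pullD k).
Proof.
apply/eqP/eqP => [<-|ck]; first by apply/ffunP => s; rewrite !ffunE /=; case: (val s).
apply/ffunP => t; have [l [lS ->]] := imset_toD_Sub t.
by rewrite ffunE /= amplify_toD -pullD_Sub -ck ffunE.
Qed.

Lemma reduced_amp_diag k : reduced psia k k = reduced psi (pullD k) (pullD k).
Proof.
rewrite !reduced_diag big_mkcond (sum_amplify); last first.
  by move=> x /negbTE xc; rewrite amp_stateE xc mul0r; case: ifP.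
by rewrite [RHS]big_mkcond; apply: eq_bigr => c _; rewrite restr_amplify amp_state_amplify.
Qed.

Lemma diag_entropy_amp (b : R) :
  diag_entropy b (reduced psia (S := toD @: S)) = diag_entropy b (reduced psi (S := S)).
Proof.
rewrite /diag_entropy (reindex pullD (onW_bij _ pullD_bij)).
by congr (- _); apply: eq_bigr => k _; rewrite reduced_amp_diag.
Qed.

End Marginal.

Lemma Ssub_amp (S : {set labU n}) : lQ n \notin S ->
  Ssub psia (toD @: S) = diag_entropy d%:R (reduced psi (S := S)).
Proof.
by move=> QS; rewrite /Ssub (vN_entropy_diag _ (reduced_amp_offdiag QS)) diag_entropy_amp.
Qed.

End Amplified.

Unset Implicit Arguments.

Theorem theorem5 (R : realType) (n d : nat) (hn : (2 <= n)%N) (hd : (0 < d)%N)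
  (alpha : 'I_d -> R[i]) (B : nat -> 'M[R[i]]_d) :
  \sum_(x : 'I_d) alpha x * (alpha x)^* = 1 ->
  (forall i : nat, (1 <= i <= n)%N -> unitary (B i)) ->
  mutinf (amp_state alpha B) [set lDa n n] [set lDa n n.-1]
    <= mutinf (unamp_state alpha B) [set lA n n] [set lA n n.-1].
Proof.
move=> _ B_unitary.
have Bn_unitary : unitary (B n) by apply: B_unitary; lia.
have Bn1_unitary : unitary (B n.-1) by apply: B_unitary; lia.
have Q_out j : (j <= n)%N -> lQ n \notin [set lA n j].
  by move=> jn; rewrite in_set1 eq_sym lA_neq_Q // ltnW.
have DE j : [set lDa n j] = @toD n @: [set lA n j] by rewrite imset_set1.
rewrite /mutinf !DE -imsetU !Ssub_amp ?in_setU ?negb_or ?Q_out ?leq_pred //.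
rewrite /Ssub (vN_entropy_diag _ (reduced_An_offdiag alpha hn hd Bn_unitary)).
rewrite (vN_entropy_diag _ (reduced_An1_offdiag alpha hn hd Bn_unitary Bn1_unitary)).
have d_ge1 : 1 <= d%:R :> R by rewrite ler1n.
have := vN_entropy_reduced_le (unamp_state alpha B) ([set lA n n] :|: [set lA n n.-1]) hd d_ge1.
lra.
Qed.
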